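(* Let $\phi\colon\mathbb{A}^n\to V$ be a morphism such that every $\phi(b)$ has a center, $\psi\colon G\times\mathbb{A}^n\to V$, $(g,b)\mapsto g(\phi(b))$, and $X=\{(g,\omega)\in G\times\operatorname{Img}\psi: g(\omega)\in W\}$. Let \[\eta\colon X\to\mathbb{A}^2\times\operatorname{Img}\psi,\qquad \Bigl(\left(\begin{smallmatrix} M & v\\ 0&1\end{smallmatrix}\right),\omega\Bigr)\mapsto(-M^{-1}v,\omega).\] Then \[\operatorname{Img}\eta = \{(\tilde v,\omega) : \omega(\tilde v) = 0,\ d\omega(\tilde v)=0 \text{ and } \operatorname{rank} F_2(\omega,\tilde v) = 2\}.\]
   Context: $K$ is an algebraically closed field. $V$ is the space of differential forms $P\,dx+Q\,dy$ with $P,Q\in K[x,y]$ of degree $\le 3$; $W\subset V$ is the set of Poincaré forms $(x+P_2+P_3)\,dx+(y+Q_2+Q_3)\,dy$, $P_i,Q_i$ homogeneous of degree $i$. $G=\mathrm{Aff}_2=\{\left(\begin{smallmatrix} M & v\\ 0&1\end{smallmatrix}\right): M\in GL_2(K),v\in K^2\}$ acts on $V$ by affine coordinate changes $g\binom{x}{y}=M\binom{x}{y}+v$, $g\binom{dx}{dy}=M\binom{dx}{dy}$. A form has a center at $a$ if $P(a)=Q(a)=0$ and there exist formal power series $\mu,F$ centered at $a$ with $\mu(a)\ne0$ and $dF=\mu\,(P\,dx+Q\,dy)$. $\omega(\tilde v)=0$ means $P(\tilde v)=Q(\tilde v)=0$; $d\omega=(Q_x-P_y)\,dx\wedge dy$.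 When $\omega(\tilde v)=0$ and $d\omega(\tilde v)=0$, the linear part of $\omega$ at $\tilde v$ is exact, equal to $dF_2$ for a quadratic form $F_2=F_2(\omega,\tilde v)$ homogeneous in $x-\tilde v_x,y-\tilde v_y$ (the quadric associated to $\omega$ at $\tilde v$; when $\omega$ has a center at $\tilde v$ it agrees up to a nonzero scalar with the degree-2 part of a first integral without constant and linear terms). Its rank is invariant under affine coordinate changes. *)

From HB Require Import structures.
From mathcomp Require Import all_boot all_order all_algebra.
From mathcomp Require Import mpoly.
Set Implicit Arguments. Unset Strict Implicit. Unset Printing Implicit Defensive.
Import Order.TTheory GRing.Theory Num.Theory.
Local Open Scope ring_scope.

Section Forms.
Variable K : fieldType.

(* A polynomial differential dform  P dx + Q dy,  P, Q in K[x,y]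
   (variable 0 is x, variable 1 is y). *)
Record dform := DForm { fP : {mpoly K[2]}; fQ : {mpoly K[2]} }.

Definition env (a : 'cV[K]_2) : 'I_2 -> K := fun i => a i 0.

(* V : forms with deg P, deg Q <= 3  (msize = 1 + total degree) *)
Definition in_V (w : dform) : Prop :=
  (msize (fP w) <= 4)%N /\ (msize (fQ w) <= 4)%N.

Definition in_W (w : dform) : Prop :=
  exists P2 P3 Q2 Q3 : {mpoly K[2]},
    [/\ P2 \is 2.-homog, P3 \is 3.-homog, Q2 \is 2.-homog & Q3 \is 3.-homog] /\
    fP w = 'X_0 + P2 + P3 /\ fQ w = 'X_1 + Q2 + Q3.

(* The affine coordinate change g = (M, v): new coordinates
   (x', y')^T = M (x, y)^T + v, hence (dx', dy')^T = M (dx, dy)^T.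
   g(w) is w written in the new coordinates: with N = M^-1, the old
   coordinates are N((x',y')^T - v) and (dx,dy)^T = N (dx',dy')^T, so
   P' = (P N11 + Q N21) o g^-1,  Q' = (P N12 + Q N22) o g^-1. *)
Definition old_coord (M : 'M[K]_2) (v : 'cV[K]_2) (i : 'I_2) : {mpoly K[2]} :=
  \sum_(j < 2) ((invmx M) i j)%:MP * ('X_j - (v j 0)%:MP).

Definition act (M : 'M[K]_2) (v : 'cV[K]_2) (w : dform) : dform :=
  let t := [tuple old_coord M v i | i < 2] in
  let N := invmx M in
  DForm ((fP w * (N 0 0)%:MP + fQ w * (N 1 0)%:MP) \mPo t)
       ((fP w * (N 0 1)%:MP + fQ w * (N 1 1)%:MP) \mPo t).

(* formal power series in two variables (u, v), coefficient of u^i v^j *)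
Definition ps := nat -> nat -> K.
Definition ps_mul (f g : ps) : ps := fun i j =>
  \sum_(k < i.+1) \sum_(l < j.+1) f k l * g (i - k)%N (j - l)%N.
Definition ps_du (f : ps) : ps := fun i j => f i.+1 j *+ i.+1.
Definition ps_dv (f : ps) : ps := fun i j => f i j.+1 *+ j.+1.

Definition mnm2 (i j : nat) : 'X_{1..2} := [multinom [tuple i; j]].
Definition ps_of (p : {mpoly K[2]}) : ps := fun i j => p@_(mnm2 i j).

Definition shift (a : 'cV[K]_2) (p : {mpoly K[2]}) : {mpoly K[2]} :=
  p \mPo [tuple 'X_i + (a i 0)%:MP | i < 2].

(* w has a center at a: P(a) = Q(a) = 0 and there are formal power series
   mu, F centered at a with mu(a) <> 0 and dF = mu (P dx + Q dy). *)
Definition has_center_at (w : dform) (a : 'cV[K]_2) : Prop :=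
  (fP w).@[env a] = 0 /\ (fQ w).@[env a] = 0 /\
  exists mu F : ps, mu 0%N 0%N != 0 /\
    (forall i j, ps_du F i j = ps_mul mu (ps_of (shift a (fP w))) i j) /\
    (forall i j, ps_dv F i j = ps_mul mu (ps_of (shift a (fQ w))) i j).

Definition has_center (w : dform) : Prop := exists a, has_center_at w a.

Definition is_morphism (n : nat) (phi : 'cV[K]_n -> dform) : Prop :=
  (forall b, in_V (phi b)) /\
  exists cP cQ : 'X_{1..2} -> {mpoly K[n]},
    forall b m, (fP (phi b))@_m = (cP m).@[fun i => b i 0] /\
                (fQ (phi b))@_m = (cQ m).@[fun i => b i 0].

Definition in_img_psi (n : nat) (phi : 'cV[K]_n -> dform) (w : dform) : Prop :=
  exists (M : 'M[K]_2) (v : 'cV[K]_2) (b : 'cV[K]_n),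
    M \in unitmx /\ w = act M v (phi b).

Definition in_img_eta (n : nat) (phi : 'cV[K]_n -> dform)
    (vt : 'cV[K]_2) (w : dform) : Prop :=
  exists (M : 'M[K]_2) (v : 'cV[K]_2),
    [/\ M \in unitmx, in_img_psi phi w, in_W (act M v w)
      & vt = - (invmx M *m v)].

(* d w = (Q_x - P_y) dx /\ dy, evaluated at vt *)
Definition dform_at (w : dform) (vt : 'cV[K]_2) : K :=
  ((fQ w)^`M(0) - (fP w)^`M(1)).@[env vt].

(* The quadric F2(w, vt): the linear part of w at vt is
   (a X + b Y) dx + (c X + d Y) dy with X = x - vt_x, Y = y - vt_y,
   a = P_x(vt), b = P_y(vt), c = Q_x(vt), d = Q_y(vt); when d w(vt) = 0
   (c = b) it equals dF2 with F2 = a/2 X^2 + b X Y + d/2 Y^2. *)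
Definition quadric (w : dform) (vt : 'cV[K]_2) : {mpoly K[2]} :=
  let a := ((fP w)^`M(0)).@[env vt] in
  let b := ((fP w)^`M(1)).@[env vt] in
  let d := ((fQ w)^`M(1)).@[env vt] in
  let X := 'X_0 - (vt 0 0)%:MP in
  let Y := 'X_1 - (vt 1 0)%:MP in
  (a / 2)%:MP * X ^+ 2 + b%:MP * X * Y + (d / 2)%:MP * Y ^+ 2.

(* rank of a binary quadratic dform q homogeneous in X = x - vt_x,
   Y = y - vt_y: rank of its symmetric (Gram) matrix, read off from the
   coefficients of q expanded in X, Y. *)
Definition qform_rank (q : {mpoly K[2]}) (vt : 'cV[K]_2) : nat :=
  let q' := shift vt q in
  \rank (\matrix_(i < 2, j < 2)
           (if i == j then q'@_(mnm2 (2 * (i == 0 :> nat))%N (2 * (i == 1 :> nat))%N)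
            else q'@_(mnm2 1 1) / 2)).

End Forms.

(* An affine change of coordinates g = (M, v) sends vt = -M^-1 v to the origin,
   and with N = M^-1 the constant and linear parts of g(w) at the origin are
   N^T w(vt) and N^T J N, where J is the Jacobian matrix of (P, Q) at vt. As g
   preserves the degree bound, g(w) is a Poincare form exactly when w(vt) = 0
   and N^T J N = 1. Such an N exists iff J is symmetric (d w(vt) = 0) and
   invertible (F_2 has rank 2), because over an algebraically closed field of
   characteristic not 2 every invertible symmetric matrix is congruent to 1. *)

From HB Require Import structures.
From mathcomp Require Import all_boot all_order all_algebra.
From mathcomp Require Import mpoly.
From mathcomp Require Import zify ring.
Set Implicit Arguments. Unset Strict Implicit. Unset Printing Implicit Defensive.
Import GRing.Theory.
Local Open Scope ring_scope.

Lemma ord2P (i : 'I_2) : i = 0 \/ i = 1.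
Proof. by case: i => [[|[|//]] Hi]; [left|right]; apply: val_inj. Qed.

Lemma sum2 (V : nmodType) (F : 'I_2 -> V) : \sum_(i < 2) F i = F 0 + F 1.
Proof. by rewrite big_ord_recl big_ord1; congr (_ + F _); apply: val_inj. Qed.

Section MPolyDegree.
Context (n k : nat) (R : ringType).
Implicit Types p q : {mpoly R[n]}.

Lemma msizeM_le_pred p q : (msize (p * q) <= (msize p + msize q).-1)%N.
Proof.
have [->|nz_p] := eqVneq p 0; first by rewrite mul0r msize0.
have [->|nz_q] := eqVneq q 0; first by rewrite mulr0 msize0.
have [->|nz_pq] := eqVneq (p * q) 0; first by rewrite msize0.
rewrite -!mlead_deg // addSn addnS /= ltnS -mdegD.
exact/lemc_mdeg/mleadM_le.
Qed.

Lemma msize_exp_affine q e : (msize q <= 2)%N -> (msize (q ^+ e) <= e.+1)%N.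
Proof.
move=> hq; elim: e => [|e IH]; first by rewrite expr0 msize1.
rewrite exprS; have := msizeM_le_pred q (q ^+ e); lia.
Qed.

Lemma msize_comp_affine (p : {mpoly R[k]}) (lq : k.-tuple {mpoly R[n]}) :
  (forall i, msize (tnth lq i) <= 2)%N -> (msize (p \mPo lq) <= msize p)%N.
Proof.
move=> hlq; rewrite comp_mpolyE; apply: leq_trans (msize_sum _ _ _) _.
apply/bigmax_leqP_seq => m /msize_mdeg_lt hm _.
apply: leq_trans (msizeZ_le _ _) (leq_trans _ hm); rewrite mdegE.
apply: (big_ind2 (fun p d => msize p <= d.+1)%N) => [|p1 d1 p2 d2 h1 h2|i _].
- by rewrite msize1.
- by have := msizeM_le_pred p1 p2; lia.
- exact: msize_exp_affine.
Qed.

End MPolyDegree.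

Section MPolyChainRule.
Context (n k : nat) (R : comRingType) (lq : k.-tuple {mpoly R[n]}).

Lemma comp_mpolyM (p q : {mpoly R[k]}) : (p * q) \mPo lq = (p \mPo lq) * (q \mPo lq).
Proof. exact: rmorphM. Qed.

Lemma mderivXU (i j : 'I_k) : ('X_i : {mpoly R[k]})^`M(j) = ((i == j)%:R)%:MP.
Proof.
rewrite mderivX mnm1E; case: eqP => [->|_]; last by rewrite scale0r.
have -> : (U_(j) - U_(j))%MM = 0%MM by apply/mnmP => l; rewrite mnmBE subnn mnm0E.
by rewrite mpolyX0 scale1r mpolyC1.
Qed.

Lemma mderiv_comp (p : {mpoly R[k]}) (j : 'I_n) :
  (p \mPo lq)^`M(j) = \sum_(i < k) (p^`M(i) \mPo lq) * (tnth lq i)^`M(j).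
Proof.
pose chain q := (q \mPo lq)^`M(j) = \sum_(i < k) (q^`M(i) \mPo lq) * (tnth lq i)^`M(j).
have chain1 : chain 1.
  rewrite /chain comp_mpoly1 -mpolyC1 mderivC big1 // => i _.
  by rewrite mderivC comp_mpolyC mul0r.
have chainM q1 q2 : chain q1 -> chain q2 -> chain (q1 * q2).
  rewrite /chain comp_mpolyM mderivM => -> ->.
  rewrite mulr_suml mulr_sumr -big_split; apply: eq_bigr => i _ /=.
  by rewrite mderivM comp_mpolyD !comp_mpolyM; ring.
have chainX (i : 'I_k) : chain 'X_i.
  rewrite /chain comp_mpolyXU -tnth_nth (bigD1 i) //= big1 ?addr0.
    by rewrite mderivXU eqxx comp_mpolyC mul1r.
  by move=> l /negPf nli; rewrite mderivXU eq_sym nli comp_mpolyC mul0r.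
elim/mpolyind: p => [|c m p _ _ IH].
  by rewrite /chain comp_mpoly0 mderiv0 big1 // => i _; rewrite mderiv0 comp_mpoly0 mul0r.
have chainXm : chain 'X_[m].
  rewrite mpolyXE_id; apply: (big_ind chain) => // i _.
  by elim: (m i) => [|e IHe]; rewrite ?expr0 // exprS; apply: chainM.
rewrite /chain comp_mpolyD mderivD IH comp_mpolyZ mderivZ chainXm scaler_sumr -big_split.
by apply: eq_bigr => i _ /=; rewrite mderivD mderivZ comp_mpolyD comp_mpolyZ mulrDl scalerAl.
Qed.

End MPolyChainRule.

Section MPolyEvalZero.
Context (n : nat) (R : comRingType).
Implicit Types p : {mpoly R[n]}.

Lemma meval_zero p : p.@[fun _ => 0] = p@_0.
Proof.
elim/mpolyind: p => [|c m p _ _ IH]; first by rewrite meval0 mcoeff0.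
rewrite mevalD mevalZ mcoeffD mcoeffZ IH mevalX mcoeffX; congr (c * _ + _).
have [->|nz_m] := eqVneq m 0%MM.
  by rewrite big1 // => i _; rewrite mnm0E expr0.
have [i nz_mi] : exists i, m i != 0%N.
  apply/existsP; apply: contra_neqT nz_m => /existsPn m0.
  by apply/mnmP => i; rewrite mnm0E; apply/eqP/negPn.
by rewrite (bigD1 i) //= expr0n (negPf nz_mi) mul0r.
Qed.

Lemma meval_zero_mderiv p i : (p^`M(i)).@[fun _ => 0] = p@_U_(i).
Proof. by rewrite meval_zero mcoeff_deriv add0m mnm0E mulr1n. Qed.

End MPolyEvalZero.

Section PoincareCoordinate.
Context (n : nat) (R : ringType).
Implicit Types p : {mpoly R[n]}.

Lemma mcoeff_pihomog d p m :
  (pihomog mdeg d p)@_m = if mdeg m == d then p@_m else 0.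
Proof.
elim/mpolyind: p => [|c m' p _ _ IH]; first by rewrite pihomog0 mcoeff0; case: ifP.
rewrite pihomogD linearZ /= pihomogX mcoeffD mcoeffZ IH mcoeffD mcoeffZ mcoeffX.
have [<-|ne] := eqVneq m' m.
  by case: ifP => _; rewrite ?mcoeffX ?mcoeff0 ?eqxx ?mulr0 ?add0r ?addr0.
by case: ifP => _; case: ifP => _; rewrite ?mcoeffX ?mcoeff0 ?(negPf ne) ?mulr0 ?add0r ?addr0.
Qed.

Lemma eq_mnm1 (i j : 'I_n) : (U_(i) == U_(j) :> 'X_{1..n})%MM = (i == j).
Proof.
apply/eqP/eqP => [eq_U|->] //; have := congr1 (fun m : 'X_{1..n} => m j) eq_U.
by rewrite !mnm1E eqxx; case: eqP.
Qed.

Definition X_add_homog23 (j : 'I_n) p :=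
  exists P2 P3, [/\ P2 \is 2.-homog, P3 \is 3.-homog & p = 'X_j + P2 + P3].

Lemma X_add_homog23P j p : (msize p <= 4)%N ->
  X_add_homog23 j p <-> p@_0 = 0 /\ forall i, p@_U_(i) = (j == i)%:R.
Proof.
move=> size_p; split.
  case=> P2 [P3 [homP2 homP3 ->]]; split => [|i];
    rewrite !mcoeffD mcoeffX !(dhomog_nemf_coeff homP2, dhomog_nemf_coeff homP3)
      ?addr0 ?eq_mnm1 //; rewrite /= ?mdeg0 ?mdeg1 //.
  by case: eqP => // /(congr1 mdeg); rewrite mdeg1 mdeg0.
move=> [p0 p1]; exists (pihomog mdeg 2 p), (pihomog mdeg 3 p); split; try exact: pihomogP.
rewrite {1}(pihomog_partitionE size_p) !big_ord_recl big_ord0 /= addr0 !addrA.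
have -> : pihomog mdeg 0 p = 0.
  by apply/mpolyP => m; rewrite mcoeff_pihomog mcoeff0 mdeg_eq0; case: eqP => // ->.
suff -> : pihomog mdeg 1 p = 'X_j by rewrite add0r.
apply/mpolyP => m; rewrite mcoeff_pihomog mcoeffX.
case: (mdeg1P m) => [[i /eqP ->]|not_U]; first by rewrite p1 eq_mnm1 eq_sym.
by case: eqP => // m_U; case: not_U; exists j; rewrite m_U.
Qed.

End PoincareCoordinate.

Lemma congruent_one_sym (F : fieldType) n (J N : 'M[F]_n) :
  N^T *m J *m N = 1%:M -> J^T = J /\ J \in unitmx.
Proof.
move=> JN1; have [NTJu Nu] := mulmx1_unit JN1.
have /andP[NTu Ju] : (N^T \in unitmx) && (J \in unitmx) by rewrite -unitmx_mul.
split=> //; have -> : J = invmx (N^T) *m invmx N.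
  have := congr1 (fun X => invmx (N^T) *m X *m invmx N) JN1.
  by rewrite /= mulmx1 !mulmxA mulVmx // mul1mx -mulmxA mulmxV // mulmx1.
by rewrite trmx_mul !trmx_inv trmxK.
Qed.

Section Matrix22.
Context (R : comRingType).

Definition mx22 (a b c d : R) : 'M[R]_2 :=
  \matrix_(i, j) if i == 0 then if j == 0 then a else b else if j == 0 then c else d.

Lemma mx22_eta (A : 'M[R]_2) : A = mx22 (A 0 0) (A 0 1) (A 1 0) (A 1 1).
Proof. by apply/matrixP => i j; rewrite mxE; case: (ord2P i) => ->; case: (ord2P j) => ->. Qed.

Lemma mx22_congr (p q r s a b c d : R) :
  (mx22 p q r s)^T *m mx22 a b c d *m mx22 p q r s =
  mx22 (p * (a * p + b * r) + r * (c * p + d * r)) (p * (a * q + b * s) + r * (c * q + d * s))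
       (q * (a * p + b * r) + s * (c * p + d * r)) (q * (a * q + b * s) + s * (c * q + d * s)).
Proof.
apply/matrixP => i j; rewrite !mxE sum2 !mxE !sum2 !mxE.
by case: (ord2P i) => ->; case: (ord2P j) => ->; rewrite /=; ring.
Qed.

Lemma det_mx22 (A : 'M[R]_2) : \det A = A 0 0 * A 1 1 - A 0 1 * A 1 0.
Proof.
rewrite (expand_det_row _ 0) sum2 /cofactor !det_mx11 !mxE /=.
have -> : lift 0 0 = 1 :> 'I_2 by apply: val_inj.
have -> : lift 1 0 = 0 :> 'I_2 by apply: val_inj.
by rewrite expr0 expr1 mul1r; ring.
Qed.

End Matrix22.

Lemma exists_sqrt (K : closedFieldType) (x : K) : exists y, y ^+ 2 = x.
Proof.
have [y hy] := @solve_monicpoly K 2 (fun i => if i == 0%N then x else 0) isT.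
by exists y; rewrite hy big_ord_recl big_ord1 /= expr0 mulr1 mul0r addr0.
Qed.

Lemma congruent_one_trans (R : comRingType) n (E J : 'M[R]_n) :
  (exists N : 'M_n, N^T *m (E^T *m J *m E) *m N = 1%:M) ->
  exists N : 'M_n, N^T *m J *m N = 1%:M.
Proof. by case=> N EJN1; exists (E *m N); rewrite trmx_mul -EJN1 !mulmxA. Qed.

Section SymmetricCongruence.
Context (K : closedFieldType).
Hypothesis two_neq0 : (2%:R : K) != 0.

Lemma sym22_congruent_one_pivot (a b d : K) : a != 0 -> a * d - b ^+ 2 != 0 ->
  exists N : 'M_2, N^T *m mx22 a b b d *m N = 1%:M.
Proof.
move=> a_neq0 det_neq0.
have [s sa] := exists_sqrt a; have [t tdet] := exists_sqrt ((a * d - b ^+ 2) / a).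
have s_neq0 : s != 0 by apply: contraNneq a_neq0 => s0; rewrite -sa s0 expr0n.
have t_neq0 : t != 0.
  apply: contraNneq det_neq0 => t0; move: tdet; rewrite t0 expr0n /= => /esym/eqP.
  by rewrite mulf_eq0 invr_eq0 (negPf a_neq0) orbF.
(* Completing the square: a x^2 + 2 b x y + d y^2 = (s x + b/s y)^2 + (t y)^2. *)
exists (mx22 s^-1 (- b / (a * t)) 0 t^-1); rewrite mx22_congr [1%:M]mx22_eta !mxE /=.
congr mx22; first by rewrite -sa; field.
- by field; rewrite a_neq0 t_neq0 s_neq0.
- by field; rewrite a_neq0 t_neq0 s_neq0.
rewrite [LHS](_ : _ = (a * d - b ^+ 2) / a / t ^+ 2); last by field; rewrite a_neq0 t_neq0.
by rewrite -tdet divff // expf_neq0.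
Qed.

Lemma sym22_congruent_one (J : 'M[K]_2) : J^T = J -> J \in unitmx ->
  exists N : 'M_2, N^T *m J *m N = 1%:M.
Proof.
move=> J_sym; have J10 : J 1 0 = J 0 1 by rewrite -[in LHS]J_sym mxE.
rewrite unitmxE unitfE det_mx22 J10 -expr2 => det_neq0.
rewrite [J]mx22_eta J10.
set a := J 0 0 in det_neq0 *; set b := J 0 1 in det_neq0 *; set d := J 1 1 in det_neq0 *.
have [a0|a_neq0] := eqVneq a 0; last exact: sym22_congruent_one_pivot.
(* Otherwise a first congruence makes the (0, 0) entry nonzero: swap the
   coordinates if d != 0, and take x |-> x + y if a = d = 0. *)
have [d0|d_neq0] := eqVneq d 0; last first.
  apply: (congruent_one_trans (E := mx22 0 1 1 0)).
  suff -> : (mx22 0 1 1 0)^T *m mx22 a b b d *m mx22 0 1 1 0 = mx22 d b b a.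
    by apply: sym22_congruent_one_pivot; rewrite // mulrC.
  by rewrite mx22_congr; congr mx22; ring.
have b_neq0 : b != 0.
  by apply: contraNneq det_neq0 => ->; rewrite a0 mul0r expr0n subr0.
apply: (congruent_one_trans (E := mx22 1 0 1 1)).
suff -> : (mx22 1 0 1 1)^T *m mx22 a b b d *m mx22 1 0 1 1 = mx22 (2%:R * b) b b 0.
  by apply: sym22_congruent_one_pivot; rewrite ?mulf_neq0 // mulr0 sub0r oppr_eq0 expf_neq0.
by rewrite mx22_congr a0 d0; congr mx22; ring.
Qed.

End SymmetricCongruence.

Section FormsAtAPoint.
Context (K : fieldType).
Implicit Types (w : dform K) (a : 'cV[K]_2).

Definition dcoef w (i : 'I_2) : {mpoly K[2]} := if i == 0 then fP w else fQ w.

Definition value_at w a : 'cV[K]_2 := \col_i (dcoef w i).@[env a].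

Definition jacobian_at w a : 'M[K]_2 := \matrix_(i, k) ((dcoef w i)^`M(k)).@[env a].

Lemma meval_env0 (p : {mpoly K[2]}) : p.@[env 0] = p@_0.
Proof. by rewrite -meval_zero; apply: meval_eq => i; rewrite /env mxE. Qed.

Lemma value_at_eq0 w a :
  value_at w a = 0 <-> (fP w).@[env a] = 0 /\ (fQ w).@[env a] = 0.
Proof.
split=> [/matrixP val0|[P0 Q0]].
  by split; [have := val0 0 0 | have := val0 1 0]; rewrite !mxE.
by apply/matrixP => i j; rewrite !mxE /dcoef; case: (ord2P i) => ->.
Qed.

Lemma dform_at_eq0 w a : dform_at w a = 0 <-> (jacobian_at w a)^T = jacobian_at w a.
Proof.
rewrite /dform_at mevalB; split=> [/subr0_eq sym|/matrixP /(_ 0 1)].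
  by apply/matrixP => i j; rewrite !mxE; case: (ord2P i) => ->; case: (ord2P j) => ->.
by rewrite !mxE => ->; rewrite subrr.
Qed.

Lemma in_W_value_jacobian w : in_V w ->
  in_W w <-> value_at w 0 = 0 /\ jacobian_at w 0 = 1%:M.
Proof.
case=> size_P size_Q; rewrite /in_W.
have coordP i : X_add_homog23 i (dcoef w i) <->
    value_at w 0 i 0 = 0 /\ forall k, jacobian_at w 0 i k = (i == k)%:R.
  rewrite X_add_homog23P; last by rewrite /dcoef; case: (i == 0).
  rewrite !mxE meval_env0; split=> [] [-> coef1]; split=> // k; move: (coef1 k);
    by rewrite ?mxE meval_env0 -meval_zero meval_zero_mderiv.
split.
  case=> P2 [P3 [Q2 [Q3 [[homP2 homP3 homQ2 homQ3] [eP eQ]]]]].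
  have /coordP [P0 P1] : X_add_homog23 0 (dcoef w 0) by exists P2, P3.
  have /coordP [Q0 Q1] : X_add_homog23 1 (dcoef w 1) by exists Q2, Q3.
  split; apply/matrixP => i j; rewrite [RHS]mxE.
    by rewrite (ord1 j); case: (ord2P i) => ->.
  by case: (ord2P i) => ->; rewrite ?P1 ?Q1.
case=> /matrixP val0 /matrixP jac1.
have [P2 [P3 [homP2 homP3 eP]]] : X_add_homog23 0 (dcoef w 0).
  by apply/coordP; rewrite val0 mxE; split=> // k; rewrite jac1 mxE.
have [Q2 [Q3 [homQ2 homQ3 eQ]]] : X_add_homog23 1 (dcoef w 1).
  by apply/coordP; rewrite val0 mxE; split=> // k; rewrite jac1 mxE.
by exists P2, P3, Q2, Q3.
Qed.

End FormsAtAPoint.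

Section AffineAction.
Context (K : fieldType) (M : 'M[K]_2) (v : 'cV[K]_2).
Let N := invmx M.
Let t := [tuple old_coord M v i | i < 2].
Let vt := - (N *m v).

Lemma msize_old_coord i : (msize (old_coord M v i) <= 2)%N.
Proof.
rewrite /old_coord; apply: leq_trans (msize_sum _ _ _) _.
apply/bigmax_leqP => j _; rewrite mul_mpolyC; apply: leq_trans (msizeZ_le _ _) _.
apply: leq_trans (msizeD_le _ _) _; rewrite geq_max msizeX mdeg1 msizeN msizeC.
by case: (_ != 0).
Qed.

Lemma meval_old_coord i : (old_coord M v i).@[env 0] = vt i 0.
Proof.
rewrite /old_coord (big_morph _ (mevalD _) (meval0 _)) /vt !mxE -sumrN.
apply: eq_bigr => j _.
by rewrite mevalM mevalC mevalB mevalC mevalXU /env mxE sub0r mulrN.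
Qed.

Lemma mderiv_old_coord i k : (old_coord M v i)^`M(k) = (N i k)%:MP.
Proof.
rewrite /old_coord (big_morph _ (mderivD _) (mderiv0 _ _)).
rewrite (eq_bigr (fun j => (N i j * (j == k)%:R)%:MP)); last first.
  by move=> j _; rewrite mderiv_mulC mderivB mderivC subr0 mderivXU mpolyCM.
rewrite -(big_morph _ (@mpolyCD 2 K) (@mpolyC0 2 K)) (bigD1 k) //= eqxx mulr1.
by rewrite big1 ?addr0 // => j /negPf ->; rewrite mulr0.
Qed.

Lemma dcoef_act w j :
  dcoef (act M v w) j = (\sum_(l < 2) dcoef w l * (N l j)%:MP) \mPo t.
Proof. by rewrite sum2 /dcoef; case: (ord2P j) => ->. Qed.

Lemma act_in_V w : in_V w -> in_V (act M v w).
Proof.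
case=> size_P size_Q.
have size_act j : (msize (dcoef (act M v w) j) <= 4)%N.
  rewrite dcoef_act; apply: leq_trans (msize_comp_affine _ _) _.
    by move=> i; rewrite tnth_mktuple msize_old_coord.
  apply: leq_trans (msize_sum _ _ _) _; apply/bigmax_leqP => l _.
  rewrite mulrC mul_mpolyC; apply: leq_trans (msizeZ_le _ _) _.
  by rewrite /dcoef; case: (l == 0).
exact: (conj (size_act 0) (size_act 1)).
Qed.

Lemma meval_comp_old_coord p : (p \mPo t).@[env 0] = p.@[env vt].
Proof.
rewrite comp_mpoly_meval; apply: meval_eq => i.
by rewrite tnth_mktuple meval_old_coord.
Qed.

Lemma value_at_act w : value_at (act M v w) 0 = N^T *m value_at w vt.
Proof.
apply/matrixP => j z; rewrite !mxE dcoef_act meval_comp_old_coord.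
rewrite (big_morph _ (mevalD _) (meval0 _)); apply: eq_bigr => l _.
by rewrite mevalM mevalC !mxE mulrC.
Qed.

Lemma jacobian_at_act w : jacobian_at (act M v w) 0 = N^T *m jacobian_at w vt *m N.
Proof.
apply/matrixP => j k; rewrite !mxE dcoef_act mderiv_comp.
rewrite (big_morph _ (mevalD _) (meval0 _)); apply: eq_bigr => i _.
rewrite tnth_mktuple mderiv_old_coord mevalM mevalC meval_comp_old_coord !mxE; congr (_ * _).
rewrite (big_morph _ (mderivD _) (mderiv0 _ _)) (big_morph _ (mevalD _) (meval0 _)).
by apply: eq_bigr => l _; rewrite mulrC mderiv_mulC mevalM mevalC !mxE.
Qed.

End AffineAction.

Section QuadricRank.
Context (K : fieldType).
Hypothesis two_neq0 : (2%:R : K) != 0.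
Implicit Types (w : dform K) (vt : 'cV[K]_2).

Definition binary_quadratic (al be ga : K) : {mpoly K[2]} :=
  al%:MP * 'X_0 ^+ 2 + be%:MP * 'X_0 * 'X_1 + ga%:MP * 'X_1 ^+ 2.

Lemma shift_binary_quadratic (vt : 'cV[K]_2) al be ga :
  let X := 'X_0 - (vt 0 0)%:MP in let Y := 'X_1 - (vt 1 0)%:MP in
  shift vt (al%:MP * X ^+ 2 + be%:MP * X * Y + ga%:MP * Y ^+ 2) = binary_quadratic al be ga.
Proof.
rewrite /shift /binary_quadratic !expr2.
rewrite !comp_mpolyD !comp_mpolyM !comp_mpolyB !comp_mpolyC !comp_mpolyXU.
by rewrite -!tnth_nth !tnth_mktuple !addrK.
Qed.

Lemma shift_quadric w vt :
  shift vt (quadric w vt) = binary_quadratic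
    (jacobian_at w vt 0 0 / 2%:R) (jacobian_at w vt 0 1) (jacobian_at w vt 1 1 / 2%:R).
Proof. by rewrite /quadric shift_binary_quadratic !mxE. Qed.

Lemma mcoeff_binary_quadratic al be ga :
  [/\ (binary_quadratic al be ga)@_(mnm2 2 0) = al,
      (binary_quadratic al be ga)@_(mnm2 0 2) = ga &
      (binary_quadratic al be ga)@_(mnm2 1 1) = be].
Proof.
rewrite /binary_quadratic -mulrA !mul_mpolyC -mpolyXD !mpolyXn !mcoeffD !mcoeffZ !mcoeffX.
have mnm2E (m : 'X_{1..2}) i j : (m == mnm2 i j) = (m 0 == i) && (m 1 == j).
  apply/eqP/andP => [->|[/eqP m0 /eqP m1]] //.
  by apply/mnmP => l; case: (ord2P l) => ->.
by rewrite !mnm2E !mulmnE !mnmDE !mnm1E /=; split; ring.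
Qed.

Lemma qform_rank_quadric w vt : (jacobian_at w vt)^T = jacobian_at w vt ->
  qform_rank (quadric w vt) vt = 2%N <-> jacobian_at w vt \in unitmx.
Proof.
set J := jacobian_at w vt; move=> /matrixP /(_ 0 1); rewrite mxE => J10.
have four_neq0 : (4%:R : K) != 0 by rewrite (natrM K 2 2) mulf_neq0.
have [c20 c02 c11] := mcoeff_binary_quadratic (J 0 0 / 2%:R) (J 0 1) (J 1 1 / 2%:R).
rewrite /qform_rank shift_quadric -/J (rwP eqP).
set G := (\matrix_(i, j) _); rewrite -/(row_free G) row_free_unit !unitmxE !unitfE.
have -> : \det G = (J 0 0 * J 1 1 - J 0 1 * J 1 0) / 4%:R.
  rewrite det_mx22 ![G _ _]mxE /= c20 c02 c11 J10.
  by field; rewrite four_neq0 two_neq0.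
by rewrite det_mx22 mulf_eq0 invr_eq0 (negPf four_neq0) orbF.
Qed.

End QuadricRank.

Lemma in_img_psi_in_V (K : fieldType) n (phi : 'cV[K]_n -> dform K) w :
  is_morphism phi -> in_img_psi phi w -> in_V w.
Proof. by case=> V_phi _ [M [v [b [_ ->]]]]; apply/act_in_V/V_phi. Qed.

Theorem lemma5p15 (K : closedFieldType) (char2 : (2%:R : K) != 0)
    (n : nat) (phi : 'cV[K]_n -> dform K)
    (Hphi : is_morphism phi) (Hcenter : forall b, has_center (phi b)) :
  forall (vt : 'cV[K]_2) (w : dform K),
    in_img_eta phi vt w <->
    [/\ in_img_psi phi w,
        (fP w).@[env vt] = 0 /\ (fQ w).@[env vt] = 0,
        dform_at w vt = 0
      & qform_rank (quadric w vt) vt = 2%N].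
Proof.
move=> vt w; split.
  case=> M [v [M_unit psi_w W_act ->]].
  have V_act := act_in_V M v (in_img_psi_in_V Hphi psi_w).
  move/(in_W_value_jacobian V_act): W_act; rewrite value_at_act jacobian_at_act.
  case=> NT_val0 /congruent_one_sym [J_sym J_unit].
  have NT_unit : (invmx M)^T \in unitmx by rewrite unitmx_tr unitmx_inv.
  split=> //; last exact/qform_rank_quadric.
    by apply/value_at_eq0; rewrite -(mulKmx NT_unit (value_at _ _)) NT_val0 mulmx0.
  exact/dform_at_eq0.
case=> psi_w /value_at_eq0 val0 /dform_at_eq0 J_sym.
move/(qform_rank_quadric char2 J_sym) => J_unit.
have [N NJN1] := sym22_congruent_one char2 J_sym J_unit.
have [_ N_unit] := mulmx1_unit NJN1.
have vt_eq : - (invmx (invmx N) *m - (invmx N *m vt)) = vt.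
  by rewrite invmxK mulmxN opprK mulmxA mulmxV // mul1mx.
exists (invmx N), (- (invmx N *m vt)); split; rewrite ?unitmx_inv ?vt_eq //.
apply/in_W_value_jacobian; first exact/act_in_V/(in_img_psi_in_V Hphi psi_w).
by rewrite value_at_act jacobian_at_act vt_eq invmxK NJN1 val0 mulmx0.
Qed.
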